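(* Let $\alpha\ge4$ and let $N'$, $M_l$, $C_j$ be as produced by the clustering procedure. Let $l\in N'$ and $j\in N$. (1) For every $j_b\in M_l$, $c_{lj}\le 2c_{j_bj}+2\alpha C_j$. (2) For all $j_a,j_b\in M_l$ with $c_{lj_a}\le c_{lj_b}$, $c_{j_aj}\le 3c_{j_bj}+4\alpha C_j$.
   Context: Setting: finite set $N$ of locations, capacity $M>0$, demands $d_j\ge0$, integer $k\ge1$, metric costs $c_{ij}$ on $N$ (nonnegative, $c_{ii}=0$, symmetric, triangle inequality). $(x,y)$ is an optimal solution of the LP-relaxation: minimize $\sum_{i,j}d_jc_{ij}x_{ij}$ s.t. $\sum_{i}x_{ij}=1$ ($j\in N$), $\sum_j d_jx_{ij}\le My_i$ ($i\in N$), $\sum_i y_i\le k$, $0\le x_{ij}\le y_i$, $0\le y_i\le1$. For $j\in N$ let $C_j=\sum_{i\in N}c_{ij}x_{ij}$. Clustering procedure: order the locations as $1,\dots,n$ so that $C_1\le\dots\le C_n$ (ties arbitrary); start with $N'=\emptyset$; for $j=1,\dots,n$ in turn, if there is no $l\in N'$ with $c_{lj}\le 2\alpha C_j$, add $j$ to $N'$. Then for each $j\in N$ let $N'(j)$ be a closest element of $N'$ to $j$ (ties arbitrary), and set $M_l=\{j\in N: N'(j)=l\}$ for $l\in N'$. *)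

From HB Require Import structures.
From mathcomp Require Import all_boot all_order all_algebra.
Set Implicit Arguments. Unset Strict Implicit. Unset Printing Implicit Defensive.
Import Order.TTheory GRing.Theory Num.Theory.
Local Open Scope ring_scope.

Section Defs.
Variables (R : realFieldType) (T : finType).

Definition is_metric (c : T -> T -> R) : Prop :=
  [/\ forall i j, 0 <= c i j,
      forall i, c i i = 0,
      forall i j, c i j = c j i &
      forall i j l, c i l <= c i j + c j l].

Definition lp_feasible (M : R) (d : T -> R) (k : nat)
    (x : T -> T -> R) (y : T -> R) : Prop :=
  [/\ forall j, \sum_i x i j = 1,
      forall i, \sum_j d j * x i j <= M * y i,
      \sum_i y i <= k%:R,
      forall i j, 0 <= x i j /\ x i j <= y i &
      forall i, 0 <= y i /\ y i <= 1].

Definition lp_obj (d : T -> R) (c : T -> T -> R) (x : T -> T -> R) : R :=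
  \sum_i \sum_j d j * c i j * x i j.

Definition lp_optimal M d k c x y : Prop :=
  lp_feasible M d k x y /\
  forall x' y', lp_feasible M d k x' y' -> lp_obj d c x <= lp_obj d c x'.

Definition Cval (c : T -> T -> R) (x : T -> T -> R) (j : T) : R :=
  \sum_i c i j * x i j.

Definition cluster_step (c : T -> T -> R) (alpha : R) (C : T -> R)
    (N' : seq T) (j : T) : seq T :=
  if has (fun l => c l j <= 2 * alpha * C j) N' then N' else rcons N' j.

Definition clusterN' c alpha C (s : seq T) : seq T :=
  foldl (cluster_step c alpha C) [::] s.

End Defs.

From HB Require Import structures.
From mathcomp Require Import all_boot all_order all_algebra.
From mathcomp Require Import lra.

Set Implicit Arguments.
Unset Strict Implicit.
Unset Printing Implicit Defensive.
Import Order.TTheory GRing.Theory Num.Theory.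
Local Open Scope ring_scope.

(* The clustering guarantees that every j lies within 2 alpha C_j of some
   cluster centre, so its closest centre N'(j) does too.  If j_b belongs to the
   cluster of l, then l is at least as close to j_b as N'(j) is, and the
   triangle inequality through j bounds c_{l j_b} by c_{j_b j} + 2 alpha C_j.
   Both claims then follow by the triangle inequality through j_b resp. l. *)

Section ClusterSequence.
Variables (R : realFieldType) (T : finType).
Variables (c : T -> T -> R) (alpha : R) (C : T -> R).

Lemma mem_foldl_cluster_step (s N0 : seq T) l :
  l \in N0 -> l \in foldl (cluster_step c alpha C) N0 s.
Proof.
elim: s N0 => [|a s IHs] N0 //= l_N0; apply: IHs.
rewrite [cluster_step _ _ _ N0 _]/cluster_step; case: ifP => // _.
by rewrite mem_rcons in_cons l_N0 orbT.
Qed.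

Lemma foldl_cluster_step_covers (s N0 : seq T) j :
  c j j <= 2 * alpha * C j -> j \in s ->
  exists2 l, l \in foldl (cluster_step c alpha C) N0 s & c l j <= 2 * alpha * C j.
Proof.
move=> cjj; elim: s N0 => [|a s IHs] N0 //=.
rewrite in_cons => /orP [/eqP<- | j_s]; last exact: IHs.
rewrite [cluster_step _ _ _ N0 _]/cluster_step; case: ifP => [/hasP [l l_N0 clj] | _].
  by exists l => //; apply: mem_foldl_cluster_step.
by exists j => //; apply: mem_foldl_cluster_step; rewrite mem_rcons mem_head.
Qed.

End ClusterSequence.

Section ClusterBounds.
Variables (R : realFieldType) (T : finType).
Variables (c : T -> T -> R) (alpha : R) (C : T -> R).
Variables (s : seq T) (nearest : T -> T).

Hypothesis c_metric : is_metric c.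
Hypothesis alpha_ge0 : 0 <= alpha.
Hypothesis C_ge0 : forall j, 0 <= C j.
Hypothesis s_full : forall j, j \in s.
Hypothesis nearest_in : forall j, nearest j \in clusterN' c alpha C s.
Hypothesis nearest_min : forall j l, l \in clusterN' c alpha C s ->
  c (nearest j) j <= c l j.

Lemma dist_nearest_le j : c (nearest j) j <= 2 * alpha * C j.
Proof.
have [_ cii _ _] := c_metric.
have cjj : c j j <= 2 * alpha * C j by rewrite cii !mulr_ge0 ?ler0n.
have [l l_N' clj] := foldl_cluster_step_covers [::] cjj (s_full j).
exact: le_trans (nearest_min j l_N') clj.
Qed.

Lemma dist_center_member_le l jb j : nearest jb = l ->
  c l jb <= c jb j + 2 * alpha * C j.
Proof.
have [_ _ csym ctri] := c_metric.
move=> <-; apply: le_trans (nearest_min jb (nearest_in j)) _.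
apply: le_trans (ctri _ j _) _.
by rewrite addrC (csym j jb) lerD2l dist_nearest_le.
Qed.

Lemma dist_center_le l jb j : nearest jb = l ->
  c l j <= 2 * c jb j + 2 * alpha * C j.
Proof.
have [_ _ _ ctri] := c_metric.
move=> jb_l; have := dist_center_member_le j jb_l; have := ctri l jb j; lra.
Qed.

Lemma dist_cluster_member_le l ja jb j : nearest jb = l -> c l ja <= c l jb ->
  c ja j <= 3 * c jb j + 4 * alpha * C j.
Proof.
have [_ _ csym ctri] := c_metric.
move=> jb_l ab; have := ctri ja l j; rewrite (csym ja l).
have := dist_center_member_le j jb_l; have := dist_center_le j jb_l.
rewrite -!mulrA; move: (alpha * C j) => a; lra.
Qed.

End ClusterBounds.

Lemma Cval_ge0 (R : realFieldType) (T : finType) M d k (c : T -> T -> R) x y j :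
  is_metric c -> lp_feasible M d k x y -> 0 <= Cval c x j.
Proof.
move=> [c_ge0 _ _ _] [_ _ _ xy _].
by apply: sumr_ge0 => i _; rewrite mulr_ge0 //; case: (xy i j).
Qed.

Theorem lemma4 (R : realFieldType) (T : finType)
    (M : R) (d : T -> R) (k : nat) (c : T -> T -> R)
    (x : T -> T -> R) (y : T -> R) (alpha : R)
    (s : seq T) (nearest : T -> T) :
  0 < M ->
  (forall j, 0 <= d j) ->
  (1 <= k)%N ->
  is_metric c ->
  lp_optimal M d k c x y ->
  4 <= alpha ->
  (* s orders all locations (each exactly once) with C nondecreasing *)
  perm_eq s (enum T) ->
  sorted (fun a b => Cval c x a <= Cval c x b) s ->
  (* nearest j = N'(j), a closest element of N' to j *)
  (forall j, nearest j \in clusterN' c alpha (Cval c x) s) ->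
  (forall j l, l \in clusterN' c alpha (Cval c x) s ->
     c (nearest j) j <= c l j) ->
  forall l j, l \in clusterN' c alpha (Cval c x) s ->
  (forall jb, nearest jb = l ->
     c l j <= 2 * c jb j + 2 * alpha * Cval c x j) /\
  (forall ja jb, nearest ja = l -> nearest jb = l -> c l ja <= c l jb ->
     c ja j <= 3 * c jb j + 4 * alpha * Cval c x j).
Proof.
move=> _ _ _ c_metric [feas _] alpha_ge4 s_perm _ nearest_in nearest_min l j _.
have alpha_ge0 : 0 <= alpha by apply: le_trans alpha_ge4.
have C_ge0 j' : 0 <= Cval c x j' := Cval_ge0 j' c_metric feas.
have s_full j' : j' \in s by rewrite (perm_mem s_perm) mem_enum.
split=> [jb | ja jb _].
  exact: (dist_center_le c_metric alpha_ge0 C_ge0 s_full nearest_in nearest_min).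
exact: (dist_cluster_member_le c_metric alpha_ge0 C_ge0 s_full nearest_in nearest_min).
Qed.
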